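(* Let $(R,\mathfrak m)$ be a noetherian local ring, $\nu$ a valuation centered on $R$, and $R\to R^{(1)}$ a local blowing up with respect to $\nu$. If $\mathrm{Nil}(R)$ is the only associated prime ideal of $R$, then $\mathrm{Nil}(R^{(1)})$ is the only associated prime ideal of $R^{(1)}$.
   Context: All rings are commutative noetherian with $1$; $\mathrm{Nil}(A)$ denotes the nilradical of $A$. A valuation on a ring $R$ is a map $\nu:R\to\Gamma\cup\{\infty\}$ ($\Gamma$ an ordered abelian group) with $\nu(ab)=\nu(a)+\nu(b)$, $\nu(a+b)\ge\min\{\nu(a),\nu(b)\}$, $\nu(1)=0$, $\nu(0)=\infty$, whose support $\mathrm{supp}(\nu)=\{a:\nu(a)=\infty\}$ is a minimal prime ideal; it extends to localizations at multiplicative sets disjoint from the support via $\nu(a/s)=\nu(a)-\nu(s)$ and restricts to subrings, implicitly. $\nu$ has a center on $R$ if $\nu\ge0$ on $R$; its center is $\mathfrak C_\nu(R)=\{a:\nu(a)>0\}$. $\nu$ is centered on $(R,\mathfrak m)$ if $\nu\ge0$ on $R$ and $\nu>0$ on $\mathfrak m$. Local blowing up: for $b\in R\setminus\mathrm{supp}(\nu)$ let $J(b)=\bigcup_{i\ge1}\mathrm{ann}_R(b^i)$, so $R/J(b)\subseteq R_b$. Given $a_1,\ldots,a_r\in R$ with $\nu(a_i)\ge\nu(b)$, let $R'=(R/J(b))[a_1/b,\ldots,a_r/b]\subseteq R_b$ and $R^{(1)}=R'_{\mathfrak C_\nu(R')}$; the canonical map $R\to R^{(1)}$ is the local blowing up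 of $R$ with respect to $\nu$ along $(b,a_1,\ldots,a_r)$. *)

From HB Require Import structures.
From mathcomp Require Import all_boot all_order all_algebra.
Set Implicit Arguments. Unset Strict Implicit. Unset Printing Implicit Defensive.
Import Order.TTheory GRing.Theory Num.Theory.
Local Open Scope ring_scope.

Section RingDefs.
Variable R : comPzRingType.

Definition is_ideal (I : R -> Prop) : Prop :=
  [/\ I 0, (forall x y, I x -> I y -> I (x + y)) &
      (forall r x, I x -> I (r * x))].

Definition is_prime_ideal (P : R -> Prop) : Prop :=
  [/\ is_ideal P, ~ P 1 & forall x y, P (x * y) -> P x \/ P y].

Definition is_maximal_ideal (M : R -> Prop) : Prop :=
  [/\ is_ideal M, ~ M 1 &
      forall I, is_ideal I -> (forall x, M x -> I x) -> ~ I 1 ->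
        forall x, I x -> M x].

Definition is_local (m : R -> Prop) : Prop :=
  is_maximal_ideal m /\
  forall M, is_maximal_ideal M -> forall x, M x <-> m x.

Definition noetherian : Prop :=
  forall I : nat -> R -> Prop, (forall n, is_ideal (I n)) ->
    (forall n x, I n x -> I n.+1 x) ->
    exists N, forall n x, (N <= n)%N -> I n x -> I N x.

Definition nilrad (x : R) : Prop := exists n : nat, x ^+ n = 0.

Definition assoc_prime (P : R -> Prop) : Prop :=
  is_prime_ideal P /\ exists x : R, forall y, P y <-> y * x = 0.

Definition nil_only_assoc : Prop :=
  forall P : R -> Prop, assoc_prime P <-> (forall y, P y <-> nilrad y).

End RingDefs.

Definition ordered_group (G : zmodType) (le : rel G) : Prop :=
  [/\ forall x, le x x,
      forall x y, le x y -> le y x -> x = y,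
      forall x y z, le x y -> le y z -> le x z,
      forall x y, le x y || le y x &
      forall x y z, le x y -> le (x + z) (y + z)].

(* Gamma ∪ {∞} is modelled as [option G], with [None] = ∞. *)
Section ValDefs.
Variables (G : zmodType) (le : rel G).

Definition vle (x y : option G) : bool :=
  match x, y with
  | _, None => true
  | None, Some _ => false
  | Some x, Some y => le x y
  end.

Definition vlt (x y : option G) : bool := vle x y && ~~ vle y x.

Definition vadd (x y : option G) : option G :=
  match x, y with
  | Some x, Some y => Some (x + y)
  | _, _ => None
  end.

Definition vmin (x y : option G) : option G := if vle x y then x else y.

Definition supp (R : comPzRingType) (nu : R -> option G) (x : R) : Prop :=
  nu x = None.

Definition is_valuation (R : comPzRingType) (nu : R -> option G) : Prop :=
  [/\ forall x y, nu (x * y) = vadd (nu x) (nu y),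
      forall x y, vle (vmin (nu x) (nu y)) (nu (x + y)),
      nu 1 = Some 0, nu 0 = None &
      is_prime_ideal (supp nu) /\
      forall P, is_prime_ideal P -> (forall x, P x -> supp nu x) ->
        forall x, supp nu x -> P x].

Definition centered_on (R : comPzRingType) (nu : R -> option G)
    (m : R -> Prop) : Prop :=
  (forall x, vle (Some 0) (nu x)) /\ (forall x, m x -> vlt (Some 0) (nu x)).

End ValDefs.

Definition is_localization_away (R Rb : comPzRingType)
    (phi : {rmorphism R -> Rb}) (b : R) : Prop :=
  [/\ exists t, phi b * t = 1,
      forall z : Rb, exists x n, z * phi b ^+ n = phi x &
      forall x y, phi x = phi y -> exists n : nat, b ^+ n * x = b ^+ n * y].

(* The subring R' = (R/J(b))[a_1/b, ..., a_r/b] of R_b, where R/J(b) is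
   identified with the image phi(R) ⊆ R_b: the smallest subring of R_b
   containing phi(R) and the elements a_i/b. *)
Definition is_subring (T : comPzRingType) (S : T -> Prop) : Prop :=
  [/\ S 1, (forall x y, S x -> S y -> S (x - y)) &
      (forall x y, S x -> S y -> S (x * y))].

Definition blowup_ring (R Rb : comPzRingType) (phi : {rmorphism R -> Rb})
    (b : R) (a : seq R) (x : Rb) : Prop :=
  forall S : Rb -> Prop, is_subring S ->
    (forall r, S (phi r)) ->
    (forall ai, ai \in a -> forall y, y * phi b = phi ai -> S y) ->
    S x.

(* The center C_nu(R') = {x in R' : nu(x) > 0}, nu extended to R_b by
   nu(phi(c)/phi(b)^n) = nu(c) - nu(b^n). *)
Definition blowup_center (G : zmodType) (le : rel G) (R Rb : comPzRingType)
    (nu : R -> option G) (phi : {rmorphism R -> Rb}) (b : R) (a : seq R)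
    (x : Rb) : Prop :=
  blowup_ring phi b a x /\
  exists (c : R) (n : nat),
    x * phi b ^+ n = phi c /\ vlt le (nu (b ^+ n)) (nu c).

(* psi : Rb -> R1 presents R1 as the localization of the subring A ⊆ Rb
   at the multiplicative set A \ C (only the values of psi on A matter). *)
Definition is_localization_on (Rb R1 : comPzRingType) (A C : Rb -> Prop)
    (psi : Rb -> R1) : Prop :=
  [/\ psi 1 = 1,
      forall x y, A x -> A y ->
        psi (x + y) = psi x + psi y /\ psi (x * y) = psi x * psi y,
      forall s, A s -> ~ C s -> exists t, psi s * t = 1,
      forall z : R1, exists x s, [/\ A x, A s, ~ C s & z * psi s = psi x] &
      forall x y, A x -> A y -> psi x = psi y ->
        exists c, [/\ A c, ~ C c & c * x = c * y]].

(* R -> R1 (= psi ∘ phi) is the local blowing up of R w.r.t. nu along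
   (b, a_1, ..., a_r). *)
Definition local_blowup (G : zmodType) (le : rel G) (R : comPzRingType)
    (nu : R -> option G) (b : R) (a : seq R) (Rb : comPzRingType)
    (phi : {rmorphism R -> Rb}) (R1 : comPzRingType) (psi : Rb -> R1) : Prop :=
  [/\ nu b <> None,
      forall ai, ai \in a -> vle le (nu b) (nu ai),
      is_localization_away phi b &
      is_localization_on (blowup_ring phi b a) (blowup_center le nu phi b a) psi].

(* In a noetherian ring, Nil is the only associated prime exactly when every
   zero divisor is nilpotent and Nil is annihilated by some nonzero element.
   Both properties pass along a map f : D -> U from a multiplicative subset D
   of a ring onto a ring of fractions, provided f is injective on D.  The
   blowing up R -> R_b -> R' -> R^(1) is such a chain: R -> R_b is injective
   because b is not nilpotent (nu(b) is finite), R' is a subring of R_b, and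
   R' -> R^(1) is injective on R' because the denominators avoid the center,
   which contains every nilpotent element (nu vanishes there). *)
From HB Require Import structures.
From mathcomp Require Import all_boot all_order all_algebra.
From Stdlib Require Import Classical IndefiniteDescription.
Import GRing.Theory.
Set Implicit Arguments. Unset Strict Implicit.
Local Open Scope ring_scope.

Section Nilradical.
Variable T : comPzRingType.
Implicit Types x y z s t u : T.

Lemma mulr_unit_eq0 u s t : s * t = 1 -> u * s = 0 -> u = 0.
Proof. by move=> st us; rewrite -[u]mulr1 -st mulrA us mul0r. Qed.

Lemma nilradMr x y : nilrad x -> nilrad (x * y).
Proof. by case=> n hn; exists n; rewrite exprMn hn mul0r. Qed.

Lemma nilradX x n : nilrad (x ^+ n) -> nilrad x.
Proof. by case=> k hk; exists (n * k)%N; rewrite exprM. Qed.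

Lemma nilrad_mulr_unit u s t : s * t = 1 -> nilrad (u * s) -> nilrad u.
Proof.
move=> st [k hk]; exists k; apply: (@mulr_unit_eq0 _ (s ^+ k) (t ^+ k)).
  by rewrite -exprMn st expr1n.
by rewrite -exprMn hk.
Qed.

Lemma annihilator_ideal z : is_ideal (fun x => x * z = 0).
Proof.
split; first by rewrite mul0r.
- by move=> x y xz yz; rewrite mulrDl xz yz addr0.
- by move=> r x xz; rewrite -mulrA xz mulr0.
Qed.

Definition zerodiv_nil_on (D : T -> Prop) : Prop :=
  forall x y, D x -> D y -> y * x = 0 -> x <> 0 -> nilrad y.

Definition zerodiv_nil : Prop := zerodiv_nil_on (fun=> True).

Lemma zerodiv_nil_on_mulrI (D : T -> Prop) c x y :
  zerodiv_nil_on D -> D c -> D (x - y) -> ~ nilrad c -> c * x = c * y -> x = y.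
Proof.
move=> zdn Dc Dxy nc cxy; apply/eqP; rewrite -subr_eq0; apply/eqP.
apply: NNPP => xy0; apply: nc; apply: zdn xy0 => //.
by rewrite mulrBr cxy subrr.
Qed.

Lemma zerodiv_nil_nilrad_prime x y :
  zerodiv_nil -> nilrad (x * y) -> nilrad x \/ nilrad y.
Proof.
move=> zdn [k]; rewrite exprMn => xy0.
have [y0 | y0] := classic (y ^+ k = 0); first by right; exists k.
by left; apply: (@nilradX _ k); exact: zdn xy0 y0.
Qed.

Lemma nil_only_assoc_of z :
  zerodiv_nil -> z <> 0 -> (forall y, nilrad y -> y * z = 0) -> nil_only_assoc T.
Proof.
move=> zdn z0 nil_z P; split.
- case=> [[_ P1 Pprime] [w Pw]] y; split.
  + move/Pw => yw; apply: zdn yw _ => // w0; apply: P1.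
    by apply/Pw; rewrite w0 mulr0.
  + case=> k yk; have : P (y ^+ k) by rewrite yk; apply/Pw; rewrite mul0r.
    elim: k {yk} => [|k IH]; first by rewrite expr0 => /P1.
    by rewrite exprS => /Pprime [].
- have annE y : nilrad y <-> y * z = 0.
    by split=> [/nil_z // | yz]; apply: zdn yz z0.
  move=> PE; split; last by exists z => y; rewrite PE annE.
  split; first split.
  + by apply/PE; exists 1%N; rewrite expr1.
  + by move=> x y /PE/annE xz /PE/annE yz; apply/PE/annE; rewrite mulrDl xz yz addr0.
  + by move=> r x /PE/annE xz; apply/PE/annE; rewrite -mulrA xz mulr0.
  + by move/PE/annE; rewrite mul1r.
  + by move=> x y /PE/(zerodiv_nil_nilrad_prime zdn) [] /PE; [left | right].
Qed.

End Nilradical.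

Section NoetherianAssociatedPrime.
Variable R : comPzRingType.
Hypothesis noethR : noetherian R.
Hypothesis nil_assR : nil_only_assoc R.

Lemma nil_assoc_annihilator : exists2 z : R, z <> 0 & forall y, nilrad y -> y * z = 0.
Proof.
have [[_ nil1 _] [z zE]] := proj2 (nil_assR (@nilrad R)) (fun=> iff_refl _).
exists z => [z0 | y /zE //].
by apply: nil1; apply/zE; rewrite z0 mulr0.
Qed.

(* The annihilator of t is an ideal containing the non-nilpotent y, so it is
   not Nil, hence not prime: some u t has a strictly larger annihilator. *)
Lemma annihilator_extend (y t : R) : ~ nilrad y -> y * t = 0 -> t <> 0 ->
  exists t', [/\ t' <> 0, y * t' = 0, forall u, u * t = 0 -> u * t' = 0
               & exists2 v, v * t' = 0 & v * t <> 0].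
Proof.
move=> ny yt t0.
have not_prime : ~ (forall u v, u * v * t = 0 -> u * t = 0 \/ v * t = 0).
  move=> pr; apply: ny; apply/(proj1 (nil_assR (fun u => u * t = 0))) => //.
  split; last by exists t.
  by split; [exact: annihilator_ideal | rewrite mul1r | exact: pr].
have [u /not_all_ex_not [v not_uv]] := not_all_ex_not _ _ not_prime.
have [uvt /not_or_and [ut vt]] := imply_to_and _ _ not_uv.
exists (u * t); split => //.
- by rewrite mulrCA yt mulr0.
- by move=> w wt; rewrite mulrCA wt mulr0.
- by exists v; rewrite // mulrA [v * u]mulrC.
Qed.

Lemma noetherian_annihilator_chain (t : nat -> R) :
  (forall n u, u * t n = 0 -> u * t n.+1 = 0) ->
  exists N, forall u, u * t N.+1 = 0 -> u * t N = 0.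
Proof.
move=> incr; have [N stab] := noethR (fun n => annihilator_ideal (t n)) incr.
by exists N => u; apply: stab.
Qed.

Lemma nil_assoc_zerodiv_nil : zerodiv_nil R.
Proof.
move=> x y _ _ yx x0; apply: NNPP => ny.
pose good t := t <> 0 /\ y * t = 0.
have /functional_choice [g gP] : forall t, exists t', good t ->
  [/\ t' <> 0, y * t' = 0, forall u, u * t = 0 -> u * t' = 0
    & exists2 v, v * t' = 0 & v * t <> 0].
  move=> t; have [[t0 yt] | bad] := classic (good t); last by exists t.
  by have [t' ht'] := annihilator_extend ny yt t0; exists t'.
pose t n := iter n g x.
have good_t n : good (t n).
  by elim: n => [|n [t0 yt]]; [split | have [] := gP _ (conj t0 yt)].
have [N stab] : exists N, forall u, u * t N.+1 = 0 -> u * t N = 0.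
  by apply: noetherian_annihilator_chain => n; have [] := gP _ (good_t n).
by have [_ _ _ [v /stab]] := gP _ (good_t N).
Qed.

End NoetherianAssociatedPrime.

Definition is_fraction_map (T U : comPzRingType) (D : T -> Prop) (f : T -> U) :=
  [/\ [/\ D 0, D 1 & forall x y, D x -> D y -> D (x * y)],
      [/\ f 0 = 0, f 1 = 1 & forall x y, D x -> D y -> f (x * y) = f x * f y],
      (forall x y, D x -> D y -> f x = f y -> x = y) &
      forall u, exists x s, [/\ D x, D s, exists t, f s * t = 1 & u * f s = f x]].

Section FractionMap.
Variables (T U : comPzRingType) (D : T -> Prop) (f : T -> U).
Hypothesis fracf : is_fraction_map D f.

Let D0 : D 0. Proof. by case: fracf => -[]. Qed.
Let D1 : D 1. Proof. by case: fracf => -[]. Qed.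
Let DM x y : D x -> D y -> D (x * y).
Proof. by case: fracf => -[_ _ DM] *; apply: DM. Qed.
Let f0 : f 0 = 0. Proof. by case: fracf => _ []. Qed.
Let f1 : f 1 = 1. Proof. by case: fracf => _ []. Qed.
Let fM x y : D x -> D y -> f (x * y) = f x * f y.
Proof. by case: fracf => _ [_ _ fM] *; apply: fM. Qed.
Let f_inj x y : D x -> D y -> f x = f y -> x = y.
Proof. by case: fracf => _ _ f_inj *; apply: f_inj. Qed.
Let f_frac u : exists x s, [/\ D x, D s, exists t, f s * t = 1 & u * f s = f x].
Proof. by case: fracf => _ _ _. Qed.

Lemma D_exp x n : D x -> D (x ^+ n).
Proof. by move=> Dx; elim: n => [|n IH]; rewrite ?expr0 // exprS; apply: DM. Qed.

Lemma f_exp x n : D x -> f (x ^+ n) = f x ^+ n.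
Proof.
move=> Dx; elim: n => [|n IH]; first by rewrite !expr0.
by rewrite !exprS fM ?IH //; apply: D_exp.
Qed.

Lemma nilrad_frac x : D x -> nilrad (f x) <-> nilrad x.
Proof.
move=> Dx; split=> -[k xk]; exists k; last by rewrite -f_exp // xk.
by apply: f_inj; rewrite ?f_exp ?xk ?f0 //; apply: D_exp.
Qed.

Lemma zerodiv_nil_frac : zerodiv_nil_on D -> zerodiv_nil U.
Proof.
move=> zdn z y _ _ yz z0.
have [x [s [Dx Ds [t st] ys]]] := f_frac y.
have [w [s' [Dw Ds' [t' st'] zs']]] := f_frac z.
have xw : x * w = 0.
  apply: f_inj => //; first exact: DM.
  by rewrite fM // f0 -ys -zs' mulrACA yz mul0r.
have w0 : w <> 0.
  by move=> w0; apply: z0; apply: (mulr_unit_eq0 st'); rewrite zs' w0 f0.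
apply: (nilrad_mulr_unit st); rewrite ys nilrad_frac //; exact: zdn xw w0.
Qed.

Lemma nil_annihilator_frac z : D z -> z <> 0 ->
    (forall y, D y -> nilrad y -> y * z = 0) ->
  f z <> 0 /\ forall u, nilrad u -> u * f z = 0.
Proof.
move=> Dz z0 nil_z; split=> [fz0 | u nu]; first by apply/z0/f_inj; rewrite ?f0.
have [x [s [Dx Ds [t st] us]]] := f_frac u.
have xz : x * z = 0 by apply: nil_z; rewrite // -nilrad_frac // -us; apply: nilradMr.
apply: (mulr_unit_eq0 st); by rewrite mulrAC us -fM // xz f0.
Qed.

End FractionMap.

Section Valuation.
Variables (G : zmodType) (R : comPzRingType) (nu : R -> option G).
Hypothesis nuM : forall x y, nu (x * y) = vadd (nu x) (nu y).
Hypotheses (nu1 : nu 1 = Some 0) (nu0 : nu 0 = None).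

Lemma nu_exp_None x n : nu (x ^+ n) = None -> nu x = None.
Proof.
elim: n => [|n IH]; first by rewrite expr0 nu1.
rewrite exprS nuM; case Ex: (nu x) => [gx|] //.
by case Exn: (nu (x ^+ n)) => // _; rewrite -Ex IH.
Qed.

Lemma nu_nilrad x : nilrad x -> nu x = None.
Proof. by case=> n xn; apply: (@nu_exp_None _ n); rewrite xn nu0. Qed.

End Valuation.

Lemma localization_away_fraction_map (R Rb : comPzRingType)
    (phi : {rmorphism R -> Rb}) (b : R) :
  is_localization_away phi b -> zerodiv_nil R -> ~ nilrad b ->
  is_fraction_map (fun=> True) phi.
Proof.
move=> [[t bt] phi_frac phi_ker] zdnR nilb.
split; rewrite ?rmorph0 ?rmorph1 //; first by split=> // *; rewrite rmorphM.
  move=> x y _ _ /phi_ker [n bxy].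
  by apply: (@zerodiv_nil_on_mulrI _ (fun=> True) (b ^+ n)) => // /nilradX.
move=> u; have [x [n un]] := phi_frac u; exists x, (b ^+ n).
split=> //; last by rewrite rmorphXn.
by exists (t ^+ n); rewrite rmorphXn -exprMn bt expr1n.
Qed.

(* Injectivity on A: if c x = c y with c outside C, then c is not nilpotent,
   so it is not a zero divisor of A. *)
Lemma localization_on_fraction_map (Rb R1 : comPzRingType) (A C : Rb -> Prop)
    (psi : Rb -> R1) :
  is_localization_on A C psi -> is_subring A -> zerodiv_nil_on A ->
  (forall c, A c -> nilrad c -> C c) -> is_fraction_map A psi.
Proof.
move=> [psi1 psiDM psi_unit psi_frac psi_ker] [A1 AB AM] zdnA nil_C.
have A0 : A 0 by rewrite -(subrr 1); apply: AB.
split=> //.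
- split=> //; last by move=> x y Ax Ay; have [] := psiDM x y Ax Ay.
  have [psi00 _] := psiDM 0 0 A0 A0; rewrite addr0 in psi00.
  by apply: (addrI (psi 0)); rewrite addr0 -psi00.
- move=> x y Ax Ay /(psi_ker x y Ax Ay) [c [Ac nCc cxy]].
  apply: (zerodiv_nil_on_mulrI zdnA Ac) => //; first exact: AB.
  by move/(nil_C c Ac).
- move=> u; have [x [s [Ax As nCs us]]] := psi_frac u.
  by exists x, s; split=> //; apply: psi_unit.
Qed.

Section BlowupRing.
Variables (R Rb : comPzRingType) (phi : {rmorphism R -> Rb}) (b : R) (a : seq R).

Lemma blowup_ring_subring : is_subring (blowup_ring phi b a).
Proof.
split; first by move=> S [].
- move=> x y Ax Ay S HS Sphi Sa; case: (HS) => _ SB _.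
  by apply: SB; [apply: Ax | apply: Ay].
- move=> x y Ax Ay S HS Sphi Sa; case: (HS) => _ _ SM.
  by apply: SM; [apply: Ax | apply: Ay].
Qed.

Lemma blowup_ring_phi r : blowup_ring phi b a (phi r).
Proof. by move=> S _ Sphi _; apply: Sphi. Qed.

Lemma blowup_center_nilrad (G : zmodType) (le : rel G) (nu : R -> option G) c :
    (forall x y, nu (x * y) = vadd (nu x) (nu y)) -> nu 1 = Some 0 -> nu 0 = None ->
    nu b <> None -> is_localization_away phi b -> is_fraction_map (fun=> True) phi ->
  blowup_ring phi b a c -> nilrad c -> blowup_center le nu phi b a c.
Proof.
move=> nuM nu1 nu0 nub [_ phi_frac _] phi_fraction Ac nc; split=> //.
have [e [n cn]] := phi_frac c; exists e, n; split=> //.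
have -> : nu e = None.
  apply: (nu_nilrad nuM nu1 nu0); rewrite -(nilrad_frac phi_fraction) // -cn.
  exact: nilradMr.
rewrite /vlt /=; case E: (nu (b ^+ n)) => //.
by move: E => /(nu_exp_None nuM nu1).
Qed.

End BlowupRing.

Theorem mainTheorem9 (R : comPzRingType) (m : R -> Prop)
    (G : zmodType) (le : rel G) (nu : R -> option G)
    (b : R) (a : seq R) (Rb : comPzRingType) (phi : {rmorphism R -> Rb})
    (R1 : comPzRingType) (psi : Rb -> R1) :
  noetherian R -> is_local m ->
  ordered_group le -> is_valuation le nu -> centered_on le nu m ->
  local_blowup le nu b a phi psi ->
  nil_only_assoc R -> nil_only_assoc R1.
Proof.
move=> noethR _ _ [nuM _ nu1 nu0 _] _ [nub _ loc_phi loc_psi] nil_assR.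
have zdnR := nil_assoc_zerodiv_nil noethR nil_assR.
have [x0 x00 nil_x0] := nil_assoc_annihilator nil_assR.
have nilb : ~ nilrad b by move/(nu_nilrad nuM nu1 nu0).
have phi_fraction := localization_away_fraction_map loc_phi zdnR nilb.
have zdnRb := zerodiv_nil_frac phi_fraction zdnR.
have [phix00 nil_phix0] :=
  nil_annihilator_frac phi_fraction (I : True) x00 (fun y _ => nil_x0 y).
have zdnA : zerodiv_nil_on (blowup_ring phi b a) by move=> x y _ _; apply: zdnRb.
have psi_fraction := localization_on_fraction_map loc_psi
  (blowup_ring_subring phi b a) zdnA
  (fun c => blowup_center_nilrad le nuM nu1 nu0 nub loc_phi phi_fraction (c:=c)).
have [psix00 nil_psix0] := nil_annihilator_frac psi_fraction
  (blowup_ring_phi (phi:=phi) (b:=b) (a:=a) x0) phix00 (fun y _ => nil_phix0 y).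
exact: nil_only_assoc_of (zerodiv_nil_frac psi_fraction zdnA) psix00 nil_psix0.
Qed.
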